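(* Let $A\subset\mathbb{R}^m$ be a set-germ at $0$ with $0\in\overline{A}$ and $B\subset\mathbb{R}^n$ a set-germ at $0$ with $0\in\overline{B}$. Then $A$ satisfies condition (SSP) at $0\in\mathbb{R}^m$ and $B$ satisfies condition (SSP) at $0\in\mathbb{R}^n$ if and only if $A\times B$ satisfies condition (SSP) at $(0,0)\in\mathbb{R}^m\times\mathbb{R}^n$.
   Context: For a set-germ $A\subset\mathbb{R}^k$ at $0$ with $0\in\overline A$, $D(A)=\{a\in S^{k-1}:\exists\, x_i\in A\setminus\{0\},\ x_i\to0,\ x_i/\|x_i\|\to a\}$. For sequences, $\|u_m\|\ll\|v_m\|,\|w_m\|$ means $\|u_m\|/\|v_m\|\to0$ and $\|u_m\|/\|w_m\|\to0$. $A$ satisfies condition (SSP) at $0$ if for every sequence $a_m\in\mathbb{R}^k$ tending to $0$ with $\lim a_m/\|a_m\|\in D(A)$ there is a sequence $b_m\in A$ with $\|a_m-b_m\|\ll\|a_m\|,\|b_m\|$. *)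

From HB Require Import structures.
From mathcomp Require Import all_boot all_order all_algebra.
From mathcomp Require Import all_classical all_reals all_analysis.
Set Implicit Arguments. Unset Strict Implicit. Unset Printing Implicit Defensive.
Import Order.TTheory GRing.Theory Num.Theory.
Import numFieldNormedType.Exports.
Local Open Scope classical_set_scope.
Local Open Scope ring_scope.

(* R^k is modelled as row vectors 'rV[R]_k, with the Euclidean norm. *)
Definition enorm {R : realType} {k : nat} (v : 'rV[R]_k) : R :=
  Num.sqrt (\sum_(i < k) v ord0 i ^+ 2).

Definition unitv {R : realType} {k : nat} (v : 'rV[R]_k) : 'rV[R]_k :=
  (enorm v)^-1 *: v.

Definition Dset {R : realType} {k : nat} (A : set 'rV[R]_k) : set 'rV[R]_k :=
  [set a : 'rV[R]_k | exists x : nat -> 'rV[R]_k,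
     (forall i, A (x i) /\ x i != 0) /\
     x @ \oo --> (0 : 'rV[R]_k) /\ (fun i => unitv (x i)) @ \oo --> a].

(* u_m << v_m :  |u_m| / |v_m| -> 0, stated without division:
   for every eps > 0, eventually |u_m| <= eps |v_m|. *)
Definition negl {R : realType} (u v : nat -> R) : Prop :=
  forall eps : R, 0 < eps -> \forall m \near \oo, u m <= eps * v m.

Definition SSP {R : realType} {k : nat} (A : set 'rV[R]_k) : Prop :=
  forall a : nat -> 'rV[R]_k,
    (forall i, a i != 0) -> a @ \oo --> (0 : 'rV[R]_k) ->
    (exists d : 'rV[R]_k, Dset A d /\ (fun i => unitv (a i)) @ \oo --> d) ->
    exists b : nat -> 'rV[R]_k, (forall i, A (b i)) /\
      negl (fun i => enorm (a i - b i)) (fun i => enorm (a i)) /\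
      negl (fun i => enorm (a i - b i)) (fun i => enorm (b i)).

Definition prodset {R : realType} {m n : nat}
  (A : set 'rV[R]_m) (B : set 'rV[R]_n) : set 'rV[R]_(m + n) :=
  [set row_mx x y | x in A & y in B].

From HB Require Import structures.
From mathcomp Require Import all_boot all_order all_algebra.
From mathcomp Require Import all_classical all_reals all_analysis.
From mathcomp Require Import ring lra.
Import Order.TTheory GRing.Theory Num.Theory.
Import numFieldNormedType.Exports.
Local Open Scope classical_set_scope.
Local Open Scope ring_scope.

Set Implicit Arguments. Unset Strict Implicit. Unset Printing Implicit Defensive.

(* For the direct implication, take a_m -> 0
   whose direction tends to a direction d = (d1, d2) of A x B, and rescale by
   |a_m|: each component converges to d1 (resp. d2). If d1 = 0, the first
   component is o(|a_m|) and any point of A closer to 0 approximates it; if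
   d1 <> 0, the first components of the points of A x B realising d show that
   d1/|d1| is a direction of A, and (SSP) for A applies. Conversely, if x_m in A
   realises a direction d of A, pairing x_m with points y_m of B with
   |y_m| <= |x_m|^2 shows that (d, 0) is a direction of A x B; (SSP) for A x B
   applied to (a_m, 0) then gives points of A close to a_m. *)

Section EuclideanNorm.
Variable R : realType.
Implicit Types (k : nat) (c : R).

Definition sqnorm k (v : 'rV[R]_k) : R := \sum_(i < k) v ord0 i ^+ 2.
Definition dotr k (u v : 'rV[R]_k) : R := \sum_(i < k) u ord0 i * v ord0 i.

Lemma enormE k (v : 'rV[R]_k) : enorm v = Num.sqrt (sqnorm v).
Proof. by []. Qed.

Lemma sqnorm_ge0 k (v : 'rV[R]_k) : 0 <= sqnorm v.
Proof. by apply: sumr_ge0 => i _; exact: sqr_ge0. Qed.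

Lemma enorm_ge0 k (v : 'rV[R]_k) : 0 <= enorm v.
Proof. exact: sqrtr_ge0. Qed.

Lemma sqr_enorm k (v : 'rV[R]_k) : enorm v ^+ 2 = sqnorm v.
Proof. by rewrite sqr_sqrtr // sqnorm_ge0. Qed.

Lemma sqnorm_eq0 k (v : 'rV[R]_k) : (sqnorm v == 0) = (v == 0).
Proof.
apply/eqP/eqP => [sq0|->]; last by rewrite /sqnorm big1 // => i _; rewrite mxE expr0n.
apply/rowP => j; rewrite mxE; apply/eqP; rewrite -sqrf_eq0; apply/eqP.
by apply: (psumr_eq0P _ sq0) => // i _; exact: sqr_ge0.
Qed.

Lemma enorm_eq0 k (v : 'rV[R]_k) : (enorm v == 0) = (v == 0).
Proof. by rewrite sqrtr_eq0 -sqnorm_eq0 eq_le sqnorm_ge0 andbT. Qed.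

Lemma enorm_gt0 k (v : 'rV[R]_k) : (0 < enorm v) = (v != 0).
Proof. by rewrite lt_neqAle enorm_ge0 andbT eq_sym enorm_eq0. Qed.

Lemma sqnorm0 k : sqnorm (0 : 'rV[R]_k) = 0.
Proof. by apply/eqP; rewrite sqnorm_eq0. Qed.

Lemma enorm0 k : enorm (0 : 'rV[R]_k) = 0.
Proof. by rewrite enormE sqnorm0 sqrtr0. Qed.

Lemma sqnormZ k c (v : 'rV[R]_k) : sqnorm (c *: v) = c ^+ 2 * sqnorm v.
Proof. by rewrite /sqnorm mulr_sumr; apply: eq_bigr => i _; rewrite mxE exprMn. Qed.

Lemma enormZ k c (v : 'rV[R]_k) : enorm (c *: v) = `|c| * enorm v.
Proof. by rewrite !enormE sqnormZ sqrtrM ?sqr_ge0 // sqrtr_sqr. Qed.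

Lemma enormN k (v : 'rV[R]_k) : enorm (- v) = enorm v.
Proof. by rewrite -scaleN1r enormZ normrN normr1 mul1r. Qed.

Lemma enorm_distC k (u v : 'rV[R]_k) : enorm (u - v) = enorm (v - u).
Proof. by rewrite -enormN opprB. Qed.

Lemma sqnorm_lincomb k a b (u v : 'rV[R]_k) :
  sqnorm (a *: u + b *: v) = a ^+ 2 * sqnorm u + 2 * a * b * dotr u v + b ^+ 2 * sqnorm v.
Proof.
rewrite /sqnorm /dotr !mulr_sumr -!big_split /=.
by apply: eq_bigr => i _; rewrite !mxE; ring.
Qed.

Lemma dotr_le k (u v : 'rV[R]_k) : dotr u v <= enorm u * enorm v.
Proof.
have [u0|] := eqVneq u 0.
  by rewrite /dotr u0 enorm0 mul0r big1 // => i _; rewrite mxE mul0r.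
have [v0 _|] := eqVneq v 0.
  by rewrite /dotr v0 enorm0 mulr0 big1 // => i _; rewrite mxE mulr0.
rewrite -!enorm_gt0 => nv nu.
have := sqnorm_ge0 (enorm v *: u + (- enorm u) *: v).
rewrite sqnorm_lincomb -!sqr_enorm.
have := mulr_gt0 nu nv; nra.
Qed.

Lemma enormD k (u v : 'rV[R]_k) : enorm (u + v) <= enorm u + enorm v.
Proof.
rewrite -(ler_pXn2r (_ : 0 < 2)%N) ?nnegrE ?addr_ge0 ?enorm_ge0 //.
rewrite sqr_enorm -[u]scale1r -[v]scale1r sqnorm_lincomb !scale1r.
by rewrite sqrrD -!sqr_enorm; have := dotr_le u v; lra.
Qed.

Lemma enorm_diff k (u v : 'rV[R]_k) : `|enorm u - enorm v| <= enorm (u - v).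
Proof.
rewrite ler_norml; apply/andP; split.
  by have := enormD (v - u) u; rewrite subrK enorm_distC; lra.
by have := enormD (u - v) v; rewrite subrK; lra.
Qed.

Lemma sqnorm_row_mx m n (x : 'rV[R]_m) (y : 'rV[R]_n) :
  sqnorm (row_mx x y) = sqnorm x + sqnorm y.
Proof.
by rewrite /sqnorm big_split_ord; congr (_ + _); apply: eq_bigr => i _;
  rewrite ?row_mxEl ?row_mxEr.
Qed.

Lemma normr_le_enorm k (v : 'rV[R]_k) : `|v| <= enorm v.
Proof.
rewrite [leLHS]/Num.Def.normr /= mx_normrE.
apply: bigmax_le => [|[i j] _]; first exact: enorm_ge0.
rewrite /= (ord1 i) -sqrtr_sqr ler_sqrt ?sqnorm_ge0 //.
by rewrite /sqnorm (bigD1 j) //= lerDl sumr_ge0 // => l _; exact: sqr_ge0.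
Qed.

Lemma enorm_le_normr k (v : 'rV[R]_k) : enorm v <= k.+1%:R * `|v|.
Proof.
rewrite -(ler_pXn2r (_ : 0 < 2)%N) ?nnegrE ?mulr_ge0 ?enorm_ge0 //.
rewrite sqr_enorm exprMn.
apply: (@le_trans _ _ (\sum_(i < k) `|v| ^+ 2)).
  apply: ler_sum => i _; rewrite -real_normK ?num_real // lerXn2r ?nnegrE //.
  rewrite [leRHS]/Num.Def.normr /= mx_normrE.
  by apply/bigmax_geP; right; exists (ord0, i).
rewrite sumr_const card_ord -[_ *+ k]mulr_natl ler_wpM2r ?sqr_ge0 //.
by rewrite -natrX ler_nat (leq_trans (leqnSn k)) // expnS leq_pmulr.
Qed.

End EuclideanNorm.

Section Sequences.
Variables (R : realType) (k : nat).
Implicit Types (A : set 'rV[R]_k) (u x : nat -> 'rV[R]_k) (l d e : 'rV[R]_k) (s : nat -> R).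

Lemma cvg_enormP u l : u @ \oo --> l <->
  forall eps, 0 < eps -> \forall i \near \oo, enorm (u i - l) <= eps.
Proof.
split=> [/cvgrPdistC_le ul eps eps0 | ul].
  have := ul (eps / k.+1%:R) (divr_gt0 eps0 (ltr0Sn _ _)).
  apply: filterS => i hi; apply: le_trans (enorm_le_normr _) _.
  by rewrite -ler_pdivlMl ?ltr0Sn // mulrC.
apply/cvgrPdistC_le => eps eps0.
by apply: filterS (ul _ eps0) => i; apply: le_trans; exact: normr_le_enorm.
Qed.

Lemma cvg_enorm u l : u @ \oo --> l -> (fun i => enorm (u i)) @ \oo --> enorm l.
Proof.
move/cvg_enormP => ul; apply/cvgrPdist_le => eps eps0.
apply: filterS (ul _ eps0) => i; apply: le_trans.
by rewrite enorm_distC; exact: enorm_diff.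
Qed.

Lemma enorm_unitv (v : 'rV[R]_k) : v != 0 -> enorm (unitv v) = 1.
Proof.
by rewrite -enorm_gt0 => v0; rewrite enormZ gtr0_norm ?invr_gt0 // mulVf ?gt_eqF.
Qed.

Lemma unitvZ c (v : 'rV[R]_k) : 0 < c -> unitv (c *: v) = unitv v.
Proof.
move=> c0; rewrite /unitv enormZ gtr0_norm // scalerA invfM mulrAC.
by rewrite mulVf ?mul1r // gt_eqF.
Qed.

Lemma unitv_id (v : 'rV[R]_k) : enorm v = 1 -> unitv v = v.
Proof. by rewrite /unitv => ->; rewrite invr1 scale1r. Qed.

Lemma cvg_unitv u e : u @ \oo --> e -> e != 0 ->
  (fun i => unitv (u i)) @ \oo --> unitv e.
Proof.
move=> ue e0; apply: cvgZ (ue).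
by apply: cvgV (cvg_enorm ue); rewrite enorm_eq0.
Qed.

Lemma closure0_enorm_le A r : closure A 0 -> 0 < r -> exists b, A b /\ enorm b <= r.
Proof.
move=> A0 r0; have r'0 : 0 < r / k.+1%:R by rewrite divr_gt0 // ltr0Sn.
have [b [Ab]] := A0 _ (nbhsx_ballx 0 _ r'0).
rewrite -ball_normE /ball_ /= sub0r normrN => br.
exists b; split=> //; apply: le_trans (enorm_le_normr _) _.
by rewrite mulrC -ler_pdivlMr ?ltr0Sn // ltW.
Qed.

Lemma patch_nonzero (P : set 'rV[R]_k) x :
  (forall i, P (x i)) -> (\forall i \near \oo, x i != 0) ->
  exists2 y : nat -> 'rV[R]_k, (forall i, P (y i) /\ y i != 0) &
    \forall i \near \oo, x i = y i.
Proof.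
move=> Px x0; have [i0 xi0] := filter_ex x0.
exists (fun i => if x i == 0 then x i0 else x i) => [i|].
  by case: eqVneq => // _; split.
by apply: filterS x0 => i /negPf ->.
Qed.

Lemma Dset_near A x d :
  (forall i, A (x i)) -> (\forall i \near \oo, x i != 0) ->
  x @ \oo --> (0 : 'rV[R]_k) -> (fun i => unitv (x i)) @ \oo --> d -> Dset A d.
Proof.
move=> Ax x0 x_0 xd; have [y Ay xy] := patch_nonzero Ax x0.
exists y; split=> //; split; first exact: cvg_trans (near_eq_cvg xy) x_0.
by apply: cvg_trans xd; apply: near_eq_cvg; apply: filterS xy => i ->.
Qed.

Lemma Dset_enorm A d : Dset A d -> enorm d = 1.
Proof.
case=> x [Ax [_ /cvg_enorm xd]].
have x1 : (fun i => enorm (unitv (x i))) = fun=> 1.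
  by apply/funext => i; rewrite enorm_unitv //; case: (Ax i).
by rewrite x1 in xd; exact: (cvg_unique _ xd (cvg_cst _)).
Qed.

Lemma scaled_cvg x s e :
  (forall i, 0 < s i) -> s @ \oo --> 0 ->
  (fun i => (s i)^-1 *: x i) @ \oo --> e -> e != 0 ->
  [/\ \forall i \near \oo, x i != 0, x @ \oo --> (0 : 'rV[R]_k),
      (fun i => unitv (x i)) @ \oo --> unitv e &
      \forall i \near \oo, enorm (x i) <= (enorm e + 1) * s i].
Proof.
move=> s0 s_0 we e0; set w := fun i => _ in we.
have xE i : x i = s i *: w i by rewrite /w scalerA mulfV ?scale1r // gt_eqF.
have e_gt0 : 0 < enorm e by rewrite enorm_gt0.
move: (cvg_enorm we) => /[dup] /cvgr_gt/(_ _ e_gt0) w0 /cvgr_le wbd.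
split.
- by apply: filterS w0 => i; rewrite enorm_gt0 /w scaler_eq0 negb_or => /andP[].
- by rewrite (funext xE) -(scale0r e); exact: cvgZ.
- by rewrite (funext xE); under eq_fun do rewrite unitvZ //; exact: cvg_unitv.
- have e1 : enorm e < enorm e + 1 by rewrite ltrDl.
  apply: filterS (wbd _ e1) => i wi.
  by rewrite xE enormZ gtr0_norm // mulrC ler_wpM2r ?(ltW (s0 i)).
Qed.

Lemma Dset_scaled A x s e :
  (forall i, A (x i)) -> (forall i, 0 < s i) -> s @ \oo --> 0 ->
  (fun i => (s i)^-1 *: x i) @ \oo --> e -> e != 0 -> Dset A (unitv e).
Proof.
move=> Ax s0 s_0 xe e0; have [x0 x_0 xu _] := scaled_cvg s0 s_0 xe e0.
exact: Dset_near x0 x_0 xu.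
Qed.
End Sequences.

Section Negligible.
Variable R : realType.
Implicit Types (u v w g s : nat -> R).

Lemma negl_le u u' v : (forall i, u' i <= u i) -> negl u v -> negl u' v.
Proof. by move=> u'u uv eps eps0; apply: filterS (uv _ eps0) => i; apply: le_trans. Qed.

Lemma neglD u u' v : negl u v -> negl u' v -> negl (fun i => u i + u' i) v.
Proof.
move=> uv u'v eps eps0; have eps2 : 0 < eps / 2 by rewrite divr_gt0.
by apply: filterS2 (uv _ eps2) (u'v _ eps2) => i; lra.
Qed.

Lemma negl_cvg0 g s : g @ \oo --> 0 -> (forall i, 0 <= s i) ->
  negl (fun i => g i * s i) s.
Proof.
move=> /cvgr_le g0 s0 eps eps0.
by apply: filterS (g0 _ eps0) => i gi; rewrite ler_wpM2r.
Qed.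

Lemma negl_le_scale u v w C : negl u v -> 0 < C ->
  (\forall i \near \oo, v i <= C * w i) -> negl u w.
Proof.
move=> uv C0 vw eps eps0; have epsC : 0 < eps / C by rewrite divr_gt0.
apply: filterS2 (uv _ epsC) vw => i ui vi; apply: le_trans ui _.
apply: le_trans (ler_wpM2l (ltW epsC) vi) _.
by rewrite mulrA divfK ?lt0r_neq0.
Qed.

Lemma negl_diff_swap k (a b : nat -> 'rV[R]_k) :
  negl (fun i => enorm (a i - b i)) (fun i => enorm (a i)) ->
  negl (fun i => enorm (a i - b i)) (fun i => enorm (b i)).
Proof.
move=> ab eps eps0; have eps1 : 0 < 1 + eps by lra.
have e'0 : 0 < eps / (1 + eps) by rewrite divr_gt0.
have e'E : eps / (1 + eps) * (1 + eps) = eps by rewrite divfK ?lt0r_neq0.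
apply: filterS (ab _ e'0) => i abi.
have := enormD (b i) (a i - b i); rewrite addrC subrK => tri.
have := ler_wpM2r (ltW eps1) (le_trans abi (ler_wpM2l (ltW e'0) tri)).
by rewrite mulrAC e'E; lra.
Qed.
End Negligible.

Section SSPApproximation.
Variables (R : realType) (k : nat) (A : set 'rV[R]_k).
Hypothesis ssp : SSP A.
Implicit Types (a x : nat -> 'rV[R]_k) (d e : 'rV[R]_k) (s t : nat -> R).

Lemma SSP_near a d :
  (\forall i \near \oo, a i != 0) -> a @ \oo --> (0 : 'rV[R]_k) ->
  (fun i => unitv (a i)) @ \oo --> d -> Dset A d ->
  exists2 b, (forall i, A (b i)) & negl (fun i => enorm (a i - b i)) (fun i => enorm (a i)).
Proof.
move=> a0 a_0 ad Dd; have [a' a'0 aa'] := patch_nonzero (P := setT) (fun=> I) a0.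
have [|||b [Ab [a'b _]]] := ssp (a := a').
- by move=> i; case: (a'0 i).
- exact: cvg_trans (near_eq_cvg aa') a_0.
- exists d; split=> //; apply: cvg_trans ad; apply: near_eq_cvg.
  by apply: filterS aa' => i ->.
by exists b => // eps eps0; apply: filterS2 aa' (a'b _ eps0) => i ->.
Qed.

Hypothesis A0 : closure A 0.

Lemma SSP_scaled_approx a x s t e :
  (forall i, A (x i)) -> (forall i, 0 < t i) -> t @ \oo --> 0 ->
  (fun i => (t i)^-1 *: x i) @ \oo --> e ->
  (forall i, 0 < s i) -> s @ \oo --> 0 ->
  (fun i => (s i)^-1 *: a i) @ \oo --> e ->
  exists2 b, (forall i, A (b i)) & negl (fun i => enorm (a i - b i)) s.
Proof.
move=> Ax t0 t_0 xe s0 s_0 ae.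
have [e0 | e_neq0] := eqVneq e 0.
  (* [|a i| = o(s i)], so any point of [A] of size [s i ^+ 2] approximates [a i]. *)
  have /choice[b bP] i : exists b, A b /\ enorm b <= s i ^+ 2.
    by apply: closure0_enorm_le; rewrite ?exprn_gt0.
  exists b => [i|]; first by case: (bP i).
  have aE i : enorm (a i) = enorm ((s i)^-1 *: a i) * s i.
    by rewrite enormZ gtr0_norm ?invr_gt0 // mulrAC mulVf ?mul1r ?gt_eqF.
  apply: (@negl_le _ (fun i => enorm ((s i)^-1 *: a i) * s i + s i * s i)).
    move=> i; apply: le_trans (enormD _ _) _; rewrite enormN -aE lerD2l -expr2.
    by case: (bP i).
  have s_ge0 i : 0 <= s i by exact: ltW.
  apply: neglD; apply: negl_cvg0 => //.
  by rewrite -(enorm0 R k) -e0; exact: cvg_enorm.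
have [a0 a_0 ae' aC] := scaled_cvg s0 s_0 ae e_neq0.
have [b Ab ab] := SSP_near a0 a_0 ae' (Dset_scaled Ax t0 t_0 xe e_neq0).
exists b => //; apply: negl_le_scale ab _ aC.
by have := enorm_ge0 e; lra.
Qed.
End SSPApproximation.

Lemma image2C (T U V : Type) (A : set T) (B : set U) (g : T -> U -> V) :
  [set g x y | x in A & y in B] = [set g x y | y in B & x in A].
Proof.
by apply/seteqP; split=> _ [u Au [v Bv <-]]; exists v => //; exists u.
Qed.

(* [f] abstracts [row_mx]; allowing also [fun y x => row_mx x y] lets
   [SSP_pair_l] serve for both factors. *)
Section Pairing.
Variables (R : realType) (m n p : nat) (f : 'rV[R]_m -> 'rV[R]_n -> 'rV[R]_p).
Hypothesis pairB : forall x y x' y', f x y - f x' y' = f (x - x') (y - y').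
Hypothesis pairZ : forall c x y, c *: f x y = f (c *: x) (c *: y).
Hypothesis sqnorm_pair : forall x y, sqnorm (f x y) = sqnorm x + sqnorm y.
Implicit Types (x : 'rV[R]_m) (y : 'rV[R]_n) (A : set 'rV[R]_m) (B : set 'rV[R]_n).

Lemma pair00 : f 0 0 = 0.
Proof. by rewrite -(subrr (0 : 'rV_m)) -(subrr (0 : 'rV_n)) -pairB subrr. Qed.

Lemma enorm_pair_gel x y : enorm x <= enorm (f x y).
Proof. by rewrite !enormE ler_sqrt ?sqnorm_ge0 // sqnorm_pair lerDl sqnorm_ge0. Qed.

Lemma enorm_pair_ger x y : enorm y <= enorm (f x y).
Proof. by rewrite !enormE ler_sqrt ?sqnorm_ge0 // sqnorm_pair lerDr sqnorm_ge0. Qed.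

Lemma enorm_pair_le x y : enorm (f x y) <= enorm x + enorm y.
Proof.
rewrite -(ler_pXn2r (_ : 0 < 2)%N) ?nnegrE ?addr_ge0 ?enorm_ge0 //.
rewrite sqr_enorm sqnorm_pair sqrrD -!sqr_enorm lerD2r lerDl.
by rewrite mulrn_wge0 // mulr_ge0 ?enorm_ge0.
Qed.

Lemma enorm_pair0 x : enorm (f x 0) = enorm x.
Proof. by rewrite !enormE sqnorm_pair sqnorm0 addr0. Qed.

Lemma cvg_pair (u : nat -> 'rV[R]_m) (v : nat -> 'rV[R]_n) l l' :
  u @ \oo --> l -> v @ \oo --> l' -> (fun i => f (u i) (v i)) @ \oo --> f l l'.
Proof.
move=> /cvg_enormP ul /cvg_enormP vl'; apply/cvg_enormP => eps eps0.
have eps2 : 0 < eps / 2 by rewrite divr_gt0.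
apply: filterS2 (ul _ eps2) (vl' _ eps2) => i uli vli.
by rewrite pairB; apply: le_trans (enorm_pair_le _ _) _; lra.
Qed.

Lemma cvg_pair_l (u : nat -> 'rV[R]_m) (v : nat -> 'rV[R]_n) l l' :
  (fun i => f (u i) (v i)) @ \oo --> f l l' -> u @ \oo --> l.
Proof.
move=> /cvg_enormP uvl; apply/cvg_enormP => eps /uvl; apply: filterS => i.
by rewrite pairB; exact: le_trans (enorm_pair_gel _ _).
Qed.

Lemma cvg_pair_r (u : nat -> 'rV[R]_m) (v : nat -> 'rV[R]_n) l l' :
  (fun i => f (u i) (v i)) @ \oo --> f l l' -> v @ \oo --> l'.
Proof.
move=> /cvg_enormP uvl; apply/cvg_enormP => eps /uvl; apply: filterS => i.
by rewrite pairB; exact: le_trans (enorm_pair_ger _ _).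
Qed.

Lemma image2_seq A B (z : nat -> 'rV[R]_p) :
  (forall i, [set f x y | x in A & y in B] (z i)) ->
  exists u v, [/\ forall i, A (u i), forall i, B (v i) & forall i, f (u i) (v i) = z i].
Proof.
move=> zP; have /choice[uv uvP] i : exists uv, [/\ A uv.1, B uv.2 & f uv.1 uv.2 = z i].
  by have [x Ax [y By <-]] := zP i; exists (x, y).
by exists (fun i => (uv i).1), (fun i => (uv i).2); split=> i; case: (uvP i).
Qed.

Lemma SSP_pair_l A B : closure B 0 -> SSP [set f x y | x in A & y in B] -> SSP A.
Proof.
move=> B0 sAB a a0 a_0 [d [Dd ad]].
have d1 := Dset_enorm Dd; have [x [Ax [x_0 xd]]] := Dd.
have x0 i : 0 < enorm (x i) by rewrite enorm_gt0; case: (Ax i).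
have /choice[y yP] i : exists y, B y /\ enorm y <= enorm (x i) ^+ 2.
  by apply: closure0_enorm_le; rewrite ?exprn_gt0.
have y_0 : (fun i => (enorm (x i))^-1 *: y i) @ \oo --> (0 : 'rV[R]_n).
  move/cvg_enormP: x_0 => x_0; apply/cvg_enormP => eps /x_0; apply: filterS => i.
  rewrite !subr0; apply: le_trans.
  rewrite enormZ gtr0_norm ?invr_gt0 // ler_pdivrMl // -expr2.
  by case: (yP i).
have DABd : Dset [set f x y | x in A & y in B] (f d 0).
  rewrite -(unitv_id (_ : enorm (f d 0) = 1)); last by rewrite enorm_pair0.
  apply: (@Dset_scaled _ _ _ (fun i => f (x i) (y i)) (fun i => enorm (x i))) => //.
  - move=> i; exists (x i); first by case: (Ax i).
    by exists (y i) => //; case: (yP i).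
  - by rewrite -(enorm0 R m); exact: cvg_enorm.
  - by under eq_fun do rewrite pairZ; exact: cvg_pair.
  - by rewrite -enorm_gt0 enorm_pair0 d1.
have [|||b [ABb [ab _]]] := sAB (fun i => f (a i) 0).
- by move=> i; rewrite -enorm_gt0 enorm_pair0 enorm_gt0.
- by rewrite -pair00; apply: cvg_pair => //; exact: cvg_cst.
- exists (f d 0); split=> //.
  have -> : (fun i => unitv (f (a i) 0)) = fun i => f (unitv (a i)) 0.
    by apply: funext => i; rewrite /unitv pairZ enorm_pair0 scaler0.
  exact: cvg_pair ad (cvg_cst _).
have [b1 [b2 [Ab1 _ bE]]] := image2_seq ABb.
have ab1 : negl (fun i => enorm (a i - b1 i)) (fun i => enorm (a i)).
  have ca : (fun i => enorm (f (a i) 0)) = fun i => enorm (a i).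
    by apply: funext => i; rewrite enorm_pair0.
  rewrite ca in ab; apply: negl_le ab => i.
  by rewrite -bE pairB; exact: enorm_pair_gel.
by exists b1; split=> //; split=> //; exact: negl_diff_swap.
Qed.

Hypothesis pair_surj : forall z, exists x y, f x y = z.

Lemma SSP_pair A B : closure A 0 -> closure B 0 -> SSP A -> SSP B ->
  SSP [set f x y | x in A & y in B].
Proof.
move=> A0 B0 sA sB c c0 c_0 [d [[z [zP [z_0 zd]]] cd]].
have [d1 [d2 dE]] := pair_surj d.
have [a [a' [_ _ cE]]] : exists a a',
    [/\ forall i, setT (a i), forall i, setT (a' i) & forall i, f (a i) (a' i) = c i].
  by apply: image2_seq => i; have [x [y <-]] := pair_surj (c i); exists x => //; exists y.
have [x [y [Ax By zE]]] := image2_seq (fun i => proj1 (zP i)).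
pose s i := enorm (c i); pose t i := enorm (z i).
have s0 i : 0 < s i by rewrite enorm_gt0.
have t0 i : 0 < t i by rewrite enorm_gt0; case: (zP i).
have s_0 : s @ \oo --> 0 by rewrite -(enorm0 R p); exact: cvg_enorm.
have t_0 : t @ \oo --> 0 by rewrite -(enorm0 R p); exact: cvg_enorm.
have ad : (fun i => f ((s i)^-1 *: a i) ((s i)^-1 *: a' i)) @ \oo --> f d1 d2.
  by rewrite dE; under eq_fun do rewrite -pairZ cE.
have xd : (fun i => f ((t i)^-1 *: x i) ((t i)^-1 *: y i)) @ \oo --> f d1 d2.
  by rewrite dE; under eq_fun do rewrite -pairZ zE.
have [b1 Ab1 ab1] := SSP_scaled_approx sA A0 Ax t0 t_0
  (cvg_pair_l xd) s0 s_0 (cvg_pair_l ad).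
have [b2 Bb2 ab2] := SSP_scaled_approx sB B0 By t0 t_0
  (cvg_pair_r xd) s0 s_0 (cvg_pair_r ad).
have cb : negl (fun i => enorm (c i - f (b1 i) (b2 i))) (fun i => enorm (c i)).
  apply: negl_le (neglD ab1 ab2) => i.
  by rewrite -cE pairB; exact: enorm_pair_le.
exists (fun i => f (b1 i) (b2 i)); split.
  by move=> i; exists (b1 i) => //; exists (b2 i).
by split=> //; exact: negl_diff_swap.
Qed.
End Pairing.

Lemma row_mxB (R : realType) k m n (x : 'M[R]_(k, m)) (y : 'M[R]_(k, n)) x' y' :
  row_mx x y - row_mx x' y' = row_mx (x - x') (y - y').
Proof. by rewrite opp_row_mx add_row_mx. Qed.

Theorem proposition2p33 (R : realType) (m n : nat)
  (A : set 'rV[R]_m) (B : set 'rV[R]_n) :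
  closure A (0 : 'rV[R]_m) -> closure B (0 : 'rV[R]_n) ->
  (SSP A /\ SSP B <-> SSP (prodset A B)).
Proof.
move=> A0 B0.
have rowB := @row_mxB R 1 m n; have rowZ := @scale_row_mx R 1 m n.
have rowS := @sqnorm_row_mx R m n.
split=> [[sA sB] | sAB].
  apply: (@SSP_pair R m n _ row_mx rowB rowZ rowS) => // z.
  by exists (lsubmx z), (rsubmx z); exact: hsubmxK.
split; first exact: (@SSP_pair_l R m n _ row_mx rowB rowZ rowS A B B0 sAB).
apply: (@SSP_pair_l R n m _ (fun y x => row_mx x y)) A0 _.
- by move=> y x y' x'; exact: rowB.
- by move=> c y x; exact: rowZ.
- by move=> y x; rewrite rowS addrC.
- by rewrite -image2C.
Qed.
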